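(* Let $AP=\{p\}$ and let $L_2$ be the set of Kripke trees $\mathcal{T}$ over $AP$ for which there is an infinite path $\pi$ from the root such that $p$ holds at no node of $\pi$ and, for every $i\ge0$, the node $\pi(2i)$ has a child at which $p$ holds. Then there is no CCTL$^*$ formula $\varphi$ over $AP$ with $\mathcal{L}(\varphi)=L_2$.
   Context: A Kripke tree over $AP$ is a non-blocking tree (nonempty prefix-closed set of words over some set of directions with root $\varepsilon$, every node having a child $w\cdot d$) with a labelling of nodes by subsets of $AP$; an infinite path from the root is a sequence $\pi(0)=\varepsilon,\pi(1),\dots$ with each $\pi(k+1)$ a child of $\pi(k)$. CCTL$^*$: state formulas $\varphi::=\top\mid p\mid\neg\varphi\mid\varphi\wedge\varphi\mid\mathsf{E}\psi\mid\mathsf{D}^k\varphi$ ($k\ge1$), path formulas $\psi::=\varphi\mid\neg\psi\mid\psi\wedge\psi\mid\mathsf{X}\psi\mid\psi\mathsf{U}\psi$, with $(\mathcal{T},w)\models\mathsf{E}\psi$ iff some infinite path starting at $w$ satisfies $\psi$ at position $0$, $(\mathcal{T},w)\models\mathsf{D}^k\varphi$ iff at least $k$ distinct children of $w$ satisfy $\varphi$, $(\mathcal{T},\pi,i)\models\varphi$ iff $(\mathcal{T},\pi(i))\models\varphi$ for state formulas, and standard semantics of $\mathsf{X}$, $\mathsf{U}$ and Boolean connectives. $\mathcal{L}(\varphi)$ is the set of Kripke trees $\mathcal{T}$ with $(\mathcal{T},\varepsilon)\models\varphi$. *)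

From Stdlib Require Import List Arith.
Import ListNotations.

(* A Kripke tree over atomic propositions AP with directions in D:
   a nonempty prefix-closed non-blocking set of words over D (root = nil,
   the children of w are the w ++ [d]), with a labelling of nodes by
   subsets of AP (lab w a  <->  a is in the label of w). *)
Record ktree (D AP : Type) : Type := KTree {
  node : list D -> Prop;
  lab : list D -> AP -> Prop;
  node_root : node [];
  node_prefix : forall u v, node (u ++ v) -> node u;
  node_nonblocking : forall w, node w -> exists d, node (w ++ [d])
}.
Arguments node {D AP} _ _.
Arguments lab {D AP} _ _ _.

Definition is_path {D AP} (T : ktree D AP) (w : list D) (pi : nat -> list D) : Prop :=
  pi 0 = w /\ forall k, node T (pi (S k)) /\ exists d, pi (S k) = pi k ++ [d].

Inductive sform (AP : Type) : Type :=
| STrue : sform AP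
| SAtom : AP -> sform AP
| SNot : sform AP -> sform AP
| SAnd : sform AP -> sform AP -> sform AP
| SE : pform AP -> sform AP
| SD : nat -> sform AP -> sform AP        (* D^k phi, well-formed only for k >= 1 *)
with pform (AP : Type) : Type :=
| PState : sform AP -> pform AP
| PNot : pform AP -> pform AP
| PAnd : pform AP -> pform AP -> pform AP
| PX : pform AP -> pform AP
| PU : pform AP -> pform AP -> pform AP.
Arguments STrue {AP}. Arguments SAtom {AP} _. Arguments SNot {AP} _.
Arguments SAnd {AP} _ _. Arguments SE {AP} _. Arguments SD {AP} _ _.
Arguments PState {AP} _. Arguments PNot {AP} _. Arguments PAnd {AP} _ _.
Arguments PX {AP} _. Arguments PU {AP} _ _.

Fixpoint wf_s {AP} (f : sform AP) : Prop :=
  match f with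
  | STrue | SAtom _ => True
  | SNot g => wf_s g
  | SAnd g h => wf_s g /\ wf_s h
  | SE p => wf_p p
  | SD k g => 1 <= k /\ wf_s g
  end
with wf_p {AP} (p : pform AP) : Prop :=
  match p with
  | PState f => wf_s f
  | PNot q => wf_p q
  | PAnd q r => wf_p q /\ wf_p r
  | PX q => wf_p q
  | PU q r => wf_p q /\ wf_p r
  end.

Fixpoint sat_s {D AP} (T : ktree D AP) (w : list D) (f : sform AP) : Prop :=
  match f with
  | STrue => True
  | SAtom a => lab T w a
  | SNot g => ~ sat_s T w g
  | SAnd g h => sat_s T w g /\ sat_s T w h
  | SE p => exists pi, is_path T w pi /\ sat_p T pi 0 p
  | SD k g => exists ds : list D, NoDup ds /\ k <= length ds /\
               forall d, In d ds -> node T (w ++ [d]) /\ sat_s T (w ++ [d]) g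
  end
with sat_p {D AP} (T : ktree D AP) (pi : nat -> list D) (i : nat) (p : pform AP) : Prop :=
  match p with
  | PState f => sat_s T (pi i) f
  | PNot q => ~ sat_p T pi i q
  | PAnd q r => sat_p T pi i q /\ sat_p T pi i r
  | PX q => sat_p T pi (S i) q
  | PU q r => exists j, i <= j /\ sat_p T pi j r /\
                forall l, i <= l < j -> sat_p T pi l q
  end.

Definition in_lang {D AP} (f : sform AP) (T : ktree D AP) : Prop := sat_s T [] f.

(* AP = {p}: represented by the one-element type unit, p := tt. *)
Definition L2 {D} (T : ktree D unit) : Prop :=
  exists pi, is_path T [] pi /\
    (forall n, ~ lab T (pi n) tt) /\
    (forall i, exists d, node T (pi (2 * i) ++ [d]) /\ lab T (pi (2 * i) ++ [d]) tt).

From Stdlib Require Import List Arith Lia Classical.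
Import ListNotations.

(** For [m : nat] let [G_m = gap_tree (Some m)] be the binary tree with an
    infinite spine of [~p] nodes, every spine node except the one at depth [m]
    carrying an extra child that starts an infinite chain of [p] nodes.  [G_m]
    belongs to [L2] exactly when [m] is odd.  By induction on formulas, the
    truth value of every CCTL* formula at the root of [G_m] is eventually
    constant in [m].  A path from the root either stays on the spine or leaves
    it once, so a path formula only sees the word of truth values of its state
    subformulas along the spine; raising [m] by one stutters a long constant
    block of that word, which no LTL formula of smaller X-depth detects.  A
    counting modality only inspects the two children of the root, which are
    again gap trees or the [p]-chain. *)

Scheme sform_mut := Induction for sform Sort Prop
with pform_mut := Induction for pform Sort Prop.
Combined Scheme form_mut from sform_mut, pform_mut.

Section Paths.
Context {D AP : Type} (T : ktree D AP).

Lemma path_extends v pi :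
  is_path T v pi -> forall j k, j <= k -> exists s, pi k = pi j ++ s.
Proof.
  intros [_ Hstep] j k Hjk. induction Hjk as [|k _ [s Hs]].
  - exists []. now rewrite app_nil_r.
  - destruct (Hstep k) as [_ [d Hd]]. exists (s ++ [d]).
    now rewrite Hd, Hs, app_assoc.
Qed.

Lemma path_length pi : is_path T [] pi -> forall j, length (pi j) = j.
Proof.
  intros [H0 Hstep] j. induction j as [|j IH]; [now rewrite H0|].
  destruct (Hstep j) as [_ [d Hd]]. rewrite Hd, length_app, IH. simpl. lia.
Qed.

Lemma path_node pi : is_path T [] pi -> forall j, node T (pi j).
Proof. intros [H0 Hstep] [|j]; [rewrite H0; apply node_root | apply Hstep]. Qed.

End Paths.

Section Subtree.
Context {D AP : Type} (T1 T2 : ktree D AP) (w : list D).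
Hypothesis node_iso : forall u, node T1 (w ++ u) <-> node T2 u.
Hypothesis lab_iso : forall u a, lab T1 (w ++ u) a <-> lab T2 u a.

Lemma is_path_lift u pi :
  is_path T2 u pi -> is_path T1 (w ++ u) (fun j => w ++ pi j).
Proof.
  intros [H0 Hstep]. split; [now rewrite H0|]. intros k.
  destruct (Hstep k) as [Hn [d Hd]]. split; [now apply node_iso|].
  exists d. now rewrite Hd, app_assoc.
Qed.

Lemma is_path_restrict u pi : is_path T1 (w ++ u) pi ->
  exists pi', is_path T2 u pi' /\ forall j, pi j = w ++ pi' j.
Proof.
  intros Hpi.
  assert (Hw : forall j, pi j = w ++ skipn (length w) (pi j)).
  { intros j. destruct (path_extends T1 _ _ Hpi 0 j ltac:(lia)) as [s Hs].
    destruct Hpi as [H0 _].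
    now rewrite Hs, H0, <- app_assoc, skipn_app, skipn_all, Nat.sub_diag. }
  exists (fun j => skipn (length w) (pi j)). split; [split|exact Hw].
  - destruct Hpi as [H0 _]. now rewrite H0, skipn_app, skipn_all, Nat.sub_diag.
  - intros k. destruct Hpi as [_ Hstep]. destruct (Hstep k) as [Hn [d Hd]].
    split; [apply node_iso; now rewrite <- Hw|].
    exists d. apply (app_inv_head w). now rewrite app_assoc, <- !Hw.
Qed.

Lemma sat_subtree :
  (forall f u, sat_s T1 (w ++ u) f <-> sat_s T2 u f) /\
  (forall p pi pi' i, (forall j, pi j = w ++ pi' j) ->
     (sat_p T1 pi i p <-> sat_p T2 pi' i p)).
Proof.
  apply (form_mut AP (fun f => forall u, sat_s T1 (w ++ u) f <-> sat_s T2 u f)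
    (fun p => forall pi pi' i, (forall j, pi j = w ++ pi' j) ->
       (sat_p T1 pi i p <-> sat_p T2 pi' i p))); simpl.
  - tauto.
  - intros a u. apply lab_iso.
  - intros g IH u. now rewrite IH.
  - intros g IHg h IHh u. now rewrite IHg, IHh.
  - intros p IH u. split.
    + intros [pi [Hpi Hp]]. destruct (is_path_restrict u pi Hpi) as [pi' [Hpi' Hw]].
      exists pi'. split; [exact Hpi'|]. now apply (IH pi).
    + intros [pi' [Hpi' Hp]]. exists (fun j => w ++ pi' j).
      split; [now apply is_path_lift|]. now apply (IH _ pi').
  - intros k g IH u.
    split; intros [ds [Hnd [Hk Hall]]]; exists ds; do 2 (split; [assumption|]);
      intros x Hx; destruct (Hall x Hx) as [Hn Hs].
    + rewrite <- app_assoc in Hn, Hs. now rewrite <- node_iso, <- IH.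
    + rewrite <- app_assoc. now rewrite node_iso, IH.
  - intros f IH pi pi' i Hpi. rewrite Hpi. apply IH.
  - intros q IH pi pi' i Hpi. now rewrite (IH pi pi' i Hpi).
  - intros q IHq r IHr pi pi' i Hpi. now rewrite (IHq pi pi' i Hpi), (IHr pi pi' i Hpi).
  - intros q IH pi pi' i Hpi. now apply IH.
  - intros q IHq r IHr pi pi' i Hpi.
    split; intros [j [Hij [Hr Hq]]]; exists j; (split; [exact Hij|]); split;
      try (now apply (IHr pi pi')); intros l Hl; apply (IHq pi pi'); auto.
Qed.

End Subtree.

Section Words.
Context {AP : Type}.

Fixpoint word_sat (w : nat -> sform AP -> Prop) (i : nat) (p : pform AP) : Prop :=
  match p with
  | PState f => w i f
  | PNot q => ~ word_sat w i q
  | PAnd q r => word_sat w i q /\ word_sat w i r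
  | PX q => word_sat w (S i) q
  | PU q r => exists j, i <= j /\ word_sat w j r /\
                forall l, i <= l < j -> word_sat w l q
  end.

Fixpoint patoms (p : pform AP) : list (sform AP) :=
  match p with
  | PState f => [f]
  | PNot q | PX q => patoms q
  | PAnd q r | PU q r => patoms q ++ patoms r
  end.

Fixpoint xdepth (p : pform AP) : nat :=
  match p with
  | PState _ => 0
  | PNot q => xdepth q
  | PX q => S (xdepth q)
  | PAnd q r | PU q r => max (xdepth q) (xdepth r)
  end.

Definition agree_on (l : list (sform AP)) (a b : sform AP -> Prop) : Prop :=
  forall f, In f l -> (a f <-> b f).

Lemma agree_on_app_l l1 l2 a b : agree_on (l1 ++ l2) a b -> agree_on l1 a b.
Proof. intros H f Hf. apply H, in_or_app. now left. Qed.

Lemma agree_on_app_r l1 l2 a b : agree_on (l1 ++ l2) a b -> agree_on l2 a b.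
Proof. intros H f Hf. apply H, in_or_app. now right. Qed.

Definition stutter {X : Type} (w : nat -> X) (n : nat) : X :=
  match n with 0 => w 0 | S n => w n end.

Definition traces {D} (T : ktree D AP) (pi : nat -> list D)
  (w : nat -> sform AP -> Prop) : Prop :=
  forall j f, sat_s T (pi j) f <-> w j f.

Lemma word_sat_congr p : forall w w' i i',
  (forall n, agree_on (patoms p) (w (i + n)) (w' (i' + n))) ->
  (word_sat w i p <-> word_sat w' i' p).
Proof.
  induction p as [f|q IH|q IHq r IHr|q IH|q IHq r IHr]; intros w w' i i' H; simpl.
  - specialize (H 0). rewrite !Nat.add_0_r in H. apply H. now left.
  - now rewrite (IH w w' i i' H).
  - rewrite (IHq w w' i i'), (IHr w w' i i'); [reflexivity| |];
      intros n; [eapply agree_on_app_r | eapply agree_on_app_l]; apply H.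
  - apply IH. intros n. rewrite !Nat.add_succ_comm. apply H.
  - assert (Hq : forall n, word_sat w (i + n) q <-> word_sat w' (i' + n) q).
    { intros n. apply IHq. intros k. rewrite <- !Nat.add_assoc.
      eapply agree_on_app_l. apply H. }
    assert (Hr : forall n, word_sat w (i + n) r <-> word_sat w' (i' + n) r).
    { intros n. apply IHr. intros k. rewrite <- !Nat.add_assoc.
      eapply agree_on_app_r. apply H. }
    split; intros [j [Hij [Hjr Hlq]]].
    + exists (i' + (j - i)). split; [lia|]. split.
      * apply Hr. now replace (i + (j - i)) with j by lia.
      * intros l Hl. replace l with (i' + (l - i')) by lia.
        apply Hq, Hlq. lia.
    + exists (i + (j - i')). split; [lia|]. split.
      * apply Hr. now replace (i' + (j - i')) with j by lia.
      * intros l Hl. replace l with (i + (l - i)) by lia.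
        apply Hq, Hlq. lia.
Qed.

Lemma sat_p_traces {D} (T : ktree D AP) pi w p :
  traces T pi w -> (sat_p T pi 0 p <-> word_sat w 0 p).
Proof.
  intros Hw. transitivity (word_sat (fun j f => sat_s T (pi j) f) 0 p).
  - generalize 0. induction p as [f|q IH|q IHq r IHr|q IH|q IHq r IHr];
      intros i; simpl.
    + reflexivity.
    + now rewrite IH.
    + now rewrite IHq, IHr.
    + apply IH.
    + split; intros [j [Hij [Hjr Hlq]]]; exists j; (split; [exact Hij|]);
        split; try (now apply IHr); intros l Hl; apply IHq; auto.
  - apply word_sat_congr. intros n f _. apply Hw.
Qed.

Lemma word_sat_stutter_succ w i p :
  word_sat (stutter w) (S i) p <-> word_sat w i p.
Proof. apply word_sat_congr. intros n f _. reflexivity. Qed.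

Lemma word_sat_stutter p : forall w,
  (forall j, j <= xdepth p -> agree_on (patoms p) (w j) (w 0)) ->
  (word_sat w 0 p <-> word_sat (stutter w) 0 p).
Proof.
  induction p as [f|q IH|q IHq r IHr|q IH|q IHq r IHr]; intros w Hblock; simpl in *.
  - reflexivity.
  - now rewrite (IH w Hblock).
  - rewrite (IHq w), (IHr w); [reflexivity| |];
      intros j Hj; [eapply agree_on_app_r | eapply agree_on_app_l];
      apply Hblock; lia.
  - rewrite word_sat_stutter_succ.
    assert (Htail : word_sat w 1 q <-> word_sat (fun n => w (S n)) 0 q)
      by (apply word_sat_congr; intros n f _; reflexivity).
    rewrite Htail, IH.
    + apply word_sat_congr. intros [|n] f Hf; simpl; [|reflexivity].
      exact (Hblock 1 ltac:(lia) f Hf).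
    + intros j Hj f Hf. simpl.
      rewrite (Hblock (S j) ltac:(lia) f Hf). symmetry. exact (Hblock 1 ltac:(lia) f Hf).
  - assert (Hq0 : word_sat w 0 q <-> word_sat (stutter w) 0 q).
    { apply IHq. intros j Hj. eapply agree_on_app_l. apply Hblock. lia. }
    assert (Hr0 : word_sat w 0 r <-> word_sat (stutter w) 0 r).
    { apply IHr. intros j Hj. eapply agree_on_app_r. apply Hblock. lia. }
    split; intros [j [_ [Hjr Hlq]]].
    + destruct j as [|j].
      * exists 0. split; [lia|]. split; [now apply Hr0|]. lia.
      * exists (S (S j)). split; [lia|]. split; [now apply word_sat_stutter_succ|].
        intros [|l] Hl; [apply Hq0, Hlq; lia|].
        apply word_sat_stutter_succ, Hlq. lia.
    + destruct j as [|j].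
      * exists 0. split; [lia|]. split; [now apply Hr0|]. lia.
      * exists j. split; [lia|]. split; [now apply word_sat_stutter_succ|].
        intros l Hl. apply word_sat_stutter_succ, Hlq. lia.
Qed.

End Words.

(** [Some m] marks the spine node at depth [m] as the one without a [p]-child,
    [None] means that every spine node has one; [descend o] is the same datum
    seen from the spine child of the root. *)
Definition descend (o : option nat) : option nat :=
  match o with Some (S m) => Some m | _ => None end.

Fixpoint descendn (j : nat) (o : option nat) : option nat :=
  match j with 0 => o | S j => descendn j (descend o) end.

Fixpoint gap_node (o : option nat) (w : list bool) : Prop :=
  match w with
  | [] => True
  | false :: w => gap_node (descend o) w
  | true :: w => o <> Some 0 /\ Forall (eq true) w
  end.

Lemma gap_node_prefix u v o : gap_node o (u ++ v) -> gap_node o u.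
Proof.
  revert o. induction u as [|[] u IH]; intros o; simpl; auto.
  intros [Ho Hv]. apply Forall_app in Hv. tauto.
Qed.

Lemma gap_node_nonblocking w o : gap_node o w -> exists d, gap_node o (w ++ [d]).
Proof.
  revert o. induction w as [|[|] w IH]; intros o; simpl.
  - now exists false.
  - intros [Ho Hw]. exists true. split; [exact Ho|]. apply Forall_app. auto.
  - apply IH.
Qed.

Definition gap_tree (o : option nat) : ktree bool unit :=
  KTree bool unit (gap_node o) (fun w _ => In true w) I
    (fun u v => gap_node_prefix u v o) (fun w => gap_node_nonblocking w o).

Lemma chain_prefix (u v : list bool) : Forall (eq true) (u ++ v) -> Forall (eq true) u.
Proof. rewrite Forall_app. tauto. Qed.

Lemma chain_nonblocking (w : list bool) :
  Forall (eq true) w -> exists d, Forall (eq true) (w ++ [d]).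
Proof. exists true. apply Forall_app. auto. Qed.

Definition p_chain : ktree bool unit :=
  KTree bool unit (Forall (eq true)) (fun _ _ => True) (Forall_nil _)
    chain_prefix chain_nonblocking.

Definition gap_sat (o : option nat) (f : sform unit) : Prop := sat_s (gap_tree o) [] f.

Lemma descendn_Some_le j m : j <= m -> descendn j (Some m) = Some (m - j).
Proof.
  revert m. induction j as [|j IH]; intros [|m] Hjm; simpl; try reflexivity; try lia.
  apply IH. lia.
Qed.

Lemma descendn_None j : descendn j None = None.
Proof. induction j; auto. Qed.

Lemma descendn_Some_gt j m : m < j -> descendn j (Some m) = None.
Proof.
  revert m. induction j as [|j IH]; intros [|m] Hmj; simpl; try lia.
  - apply descendn_None.
  - apply IH. lia.
Qed.

Lemma descendn_Some_eq_0 j m : descendn j (Some m) = Some 0 <-> j = m.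
Proof.
  destruct (Nat.le_gt_cases j m) as [Hjm|Hmj].
  - rewrite descendn_Some_le by exact Hjm.
    split; [injection 1; lia | intros ->; now rewrite Nat.sub_diag].
  - rewrite descendn_Some_gt by exact Hmj. split; [discriminate | lia].
Qed.

Lemma in_true_spine j u : In true (repeat false j ++ u) <-> In true u.
Proof.
  rewrite in_app_iff. split; [intros [H|H]; auto | auto].
  apply repeat_spec in H. discriminate.
Qed.

Lemma gap_node_spine j o u : gap_node o (repeat false j ++ u) <-> gap_node (descendn j o) u.
Proof. revert o. induction j as [|j IH]; intros o; [reflexivity | apply IH]. Qed.

Lemma sat_gap_spine_app o j u f :
  sat_s (gap_tree o) (repeat false j ++ u) f <-> sat_s (gap_tree (descendn j o)) u f.
Proof.
  apply sat_subtree.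
  - intros v. apply gap_node_spine.
  - intros v a. apply in_true_spine.
Qed.

Lemma sat_p_chain u f : Forall (eq true) u -> (sat_s p_chain u f <-> sat_s p_chain [] f).
Proof.
  intros Hu. rewrite <- (app_nil_r u) at 1. apply sat_subtree.
  - intros v. simpl. rewrite Forall_app. tauto.
  - reflexivity.
Qed.

Lemma sat_gap_branch o u f : o <> Some 0 -> Forall (eq true) u ->
  (sat_s (gap_tree o) (true :: u) f <-> sat_s p_chain [] f).
Proof.
  intros Ho Hu. rewrite <- (sat_p_chain u f Hu). apply (sat_subtree _ _ [true]).
  - intros v. simpl. tauto.
  - intros v a. simpl. tauto.
Qed.

Definition spine_word (o : option nat) (j : nat) (f : sform unit) : Prop :=
  gap_sat (descendn j o) f.

Definition branch_word (o : option nat) (b j : nat) (f : sform unit) : Prop :=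
  if j <=? b then spine_word o j f else sat_s p_chain [] f.

Lemma sat_gap_spine o j f : sat_s (gap_tree o) (repeat false j) f <-> spine_word o j f.
Proof. rewrite <- (app_nil_r (repeat false j)). apply sat_gap_spine_app. Qed.

Lemma first_transition (Q : nat -> Prop) :
  ~ Q 0 -> forall n, Q n -> exists b, ~ Q b /\ Q (S b).
Proof.
  intros H0 n. induction n as [|n IH]; intros Hn; [contradiction|].
  destruct (classic (Q n)); [now apply IH | now exists n].
Qed.

Lemma path_on_spine {AP} (T : ktree bool AP) pi :
  is_path T [] pi -> forall j, ~ In true (pi j) -> pi j = repeat false j.
Proof.
  intros Hpi j Hj. rewrite <- (path_length T pi Hpi j) at 2. apply Forall_eq_repeat.
  apply Forall_forall. intros [|] Hx; [contradiction | reflexivity].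
Qed.

Lemma gap_path_cases o pi : is_path (gap_tree o) [] pi ->
  traces (gap_tree o) pi (spine_word o) \/
  exists b, descendn b o <> Some 0 /\ traces (gap_tree o) pi (branch_word o b).
Proof.
  intros Hpi. pose proof (path_on_spine _ pi Hpi) as Hspine.
  destruct (classic (exists j, In true (pi j))) as [[j Hj] | Hnone].
  - right.
    assert (H0 : ~ In true (pi 0)) by (destruct Hpi as [-> _]; simpl; auto).
    destruct (first_transition (fun j => In true (pi j)) H0 j Hj) as [b [Hb HSb]].
    destruct (proj2 Hpi b) as [Hn [d Hd]].
    rewrite Hd, (Hspine b Hb) in HSb, Hn.
    apply in_true_spine in HSb. destruct HSb as [Htrue | []]. subst d.
    apply gap_node_spine in Hn. destruct Hn as [Hgap _].
    exists b. split; [exact Hgap|]. intros k f. unfold branch_word.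
    destruct (Nat.leb_spec k b) as [Hkb|Hbk].
    + rewrite Hspine; [apply sat_gap_spine|]. intros Hk. apply Hb.
      destruct (path_extends _ _ _ Hpi k b Hkb) as [s ->]. apply in_or_app. now left.
    + destruct (path_extends _ _ _ Hpi (S b) k Hbk) as [s Hs].
      rewrite Hd, (Hspine b Hb), <- app_assoc in Hs. simpl in Hs.
      pose proof (path_node _ _ Hpi k) as Hnode.
      rewrite Hs in Hnode |- *. simpl in Hnode.
      apply gap_node_spine in Hnode. destruct Hnode as [_ Hchain].
      rewrite sat_gap_spine_app. now apply sat_gap_branch.
  - left. intros j f. rewrite Hspine; [apply sat_gap_spine|].
    intros Hj. apply Hnone. now exists j.
Qed.

Lemma gap_spine_is_path o : is_path (gap_tree o) [] (fun j => repeat false j).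
Proof.
  split; [reflexivity|]. intros k. split; [|exists false; apply repeat_cons].
  rewrite <- (app_nil_r (repeat false (S k))). now apply gap_node_spine.
Qed.

Lemma gap_branch_path o b : descendn b o <> Some 0 ->
  exists pi, is_path (gap_tree o) [] pi /\ traces (gap_tree o) pi (branch_word o b).
Proof.
  intros Hb.
  assert (Hchain : forall n, Forall (eq true) (repeat true n)).
  { intros n. apply Forall_forall. intros x Hx. symmetry. now apply repeat_spec in Hx. }
  set (pi j := if j <=? b then repeat false j
               else repeat false b ++ true :: repeat true (j - S b)).
  assert (Hnode : forall j, gap_node o (pi j)).
  { intros j. unfold pi. destruct (j <=? b).
    - rewrite <- (app_nil_r (repeat false j)). now apply gap_node_spine.
    - apply gap_node_spine. simpl. auto. }
  exists pi. split; [split|].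
  - reflexivity.
  - intros k. split; [apply Hnode|]. unfold pi.
    destruct (Nat.leb_spec (S k) b), (Nat.leb_spec k b); try lia.
    + exists false. apply repeat_cons.
    + exists true. now replace k with b by lia; rewrite Nat.sub_diag.
    + exists true. replace (S k - S b) with (S (k - S b)) by lia.
      rewrite <- app_assoc. simpl. now rewrite repeat_cons.
  - intros j f. unfold pi, branch_word. destruct (j <=? b).
    + apply sat_gap_spine.
    + rewrite sat_gap_spine_app. now apply sat_gap_branch.
Qed.

Lemma gap_sat_E o p : gap_sat o (SE p) <->
  word_sat (spine_word o) 0 p \/
  exists b, descendn b o <> Some 0 /\ word_sat (branch_word o b) 0 p.
Proof.
  unfold gap_sat at 1. simpl. split.
  - intros [pi [Hpi Hp]]. destruct (gap_path_cases o pi Hpi) as [Hw | [b [Hb Hw]]].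
    + left. now apply (sat_p_traces (gap_tree o) pi).
    + right. exists b. split; [exact Hb|]. now apply (sat_p_traces (gap_tree o) pi).
  - intros [Hp | [b [Hb Hp]]].
    + exists (fun j => repeat false j). split; [apply gap_spine_is_path|].
      apply (sat_p_traces (gap_tree o) _ (spine_word o)); [|exact Hp].
      intros j f. apply sat_gap_spine.
    + destruct (gap_branch_path o b Hb) as [pi [Hpi Hw]].
      exists pi. split; [exact Hpi|]. now apply (sat_p_traces (gap_tree o) pi _ _ Hw).
Qed.

Lemma gap_sat_child o d g :
  node (gap_tree o) [d] /\ sat_s (gap_tree o) [d] g <->
  (if d then o <> Some 0 /\ sat_s p_chain [] g else gap_sat (descend o) g).
Proof.
  destruct d; simpl.
  - split; intros [Ho Hg].
    + split; [apply Ho|]. now rewrite <- (sat_gap_branch o [] g (proj1 Ho)).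
    + split; [auto|]. now apply sat_gap_branch.
  - rewrite (sat_gap_spine o 1). tauto.
Qed.

Definition gap_stable (f : sform unit) : Prop :=
  exists N, forall a b, N <= a -> N <= b -> (gap_sat (Some a) f <-> gap_sat (Some b) f).

Lemma iff_const_from_step (P : nat -> Prop) N :
  (forall m, N <= m -> (P m <-> P (S m))) -> forall a, N <= a -> (P a <-> P N).
Proof.
  intros Hstep a Ha. induction Ha as [|a Ha IH]; [reflexivity|].
  rewrite <- IH. symmetry. now apply Hstep.
Qed.

Lemma gap_stable_list (l : list (sform unit)) : (forall f, In f l -> gap_stable f) ->
  exists N, forall f, In f l -> forall a b, N <= a -> N <= b ->
    (gap_sat (Some a) f <-> gap_sat (Some b) f).
Proof.
  induction l as [|f l IH]; intros Hl; [now exists 0|].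
  destruct (Hl f (or_introl eq_refl)) as [N1 H1].
  destruct IH as [N2 H2]; [intros g Hg; apply Hl; now right|].
  exists (max N1 N2). intros g [<- | Hg] a b Ha Hb.
  - apply H1; lia.
  - apply H2; auto; lia.
Qed.

Section StableE.
Variables (p : pform unit) (N m : nat).
Hypothesis atoms_const : forall f, In f (patoms p) -> forall a b, N <= a -> N <= b ->
  (gap_sat (Some a) f <-> gap_sat (Some b) f).
Hypothesis m_large : N + xdepth p < m.

Lemma spine_word_step :
  word_sat (spine_word (Some m)) 0 p <-> word_sat (spine_word (Some (S m))) 0 p.
Proof.
  rewrite word_sat_stutter.
  - apply word_sat_congr. intros [|n] f Hf; [apply atoms_const; auto; lia | reflexivity].
  - intros j Hj f Hf. unfold spine_word. simpl.
    rewrite descendn_Some_le by lia. apply atoms_const; auto; lia.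
Qed.

Lemma branch_word_step_short b : b <= xdepth p ->
  word_sat (branch_word (Some m) b) 0 p <-> word_sat (branch_word (Some (S m)) b) 0 p.
Proof.
  intros Hb. apply word_sat_congr. intros n f Hf. simpl. unfold branch_word, spine_word.
  destruct (Nat.leb_spec n b); [|reflexivity].
  rewrite !descendn_Some_le by lia. apply atoms_const; auto; lia.
Qed.

Lemma branch_word_step_long b : xdepth p <= b ->
  word_sat (branch_word (Some m) b) 0 p <-> word_sat (branch_word (Some (S m)) (S b)) 0 p.
Proof.
  intros Hb. rewrite word_sat_stutter.
  - apply word_sat_congr. intros [|n] f Hf; [apply atoms_const; auto; lia | reflexivity].
  - intros j Hj f Hf. unfold branch_word, spine_word.
    destruct (Nat.leb_spec j b); [|lia]. simpl.
    rewrite descendn_Some_le by lia. apply atoms_const; auto; lia.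
Qed.

Lemma gap_sat_E_step : gap_sat (Some m) (SE p) <-> gap_sat (Some (S m)) (SE p).
Proof.
  rewrite !gap_sat_E. split; intros [Hs | [b [Hb Hw]]]; try rewrite descendn_Some_eq_0 in Hb.
  - left. now apply spine_word_step.
  - right. destruct (Nat.le_gt_cases b (xdepth p)).
    + exists b. rewrite descendn_Some_eq_0. split; [lia|]. now apply branch_word_step_short.
    + exists (S b). split; [now rewrite descendn_Some_eq_0; injection|].
      apply branch_word_step_long; [lia | exact Hw].
  - left. now apply spine_word_step.
  - right. destruct (Nat.le_gt_cases b (xdepth p)).
    + exists b. rewrite descendn_Some_eq_0. split; [lia|]. now apply branch_word_step_short.
    + destruct b as [|b]; [lia|]. exists b.
      split; [now rewrite descendn_Some_eq_0; intros ->|].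
      apply branch_word_step_long; [lia | exact Hw].
Qed.

End StableE.

Lemma gap_stable_E p : (forall f, In f (patoms p) -> gap_stable f) -> gap_stable (SE p).
Proof.
  intros Hatoms. destruct (gap_stable_list _ Hatoms) as [N HN].
  exists (S (N + xdepth p)). intros a b Ha Hb.
  pose proof (iff_const_from_step (fun m => gap_sat (Some m) (SE p)) (S (N + xdepth p))
    (fun m Hm => gap_sat_E_step p N m HN ltac:(lia))) as Hconst.
  now rewrite (Hconst a Ha), (Hconst b Hb).
Qed.

Lemma gap_stable_D k g : gap_stable g -> gap_stable (SD k g).
Proof.
  intros [N HN]. exists (S N). intros [|a] [|b] Ha Hb; try lia.
  assert (Hchild : forall d,
    node (gap_tree (Some (S a))) [d] /\ sat_s (gap_tree (Some (S a))) [d] g <->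
    node (gap_tree (Some (S b))) [d] /\ sat_s (gap_tree (Some (S b))) [d] g).
  { intros d. rewrite !gap_sat_child. destruct d.
    - split; intros [_ Hg]; split; [discriminate | exact Hg | discriminate | exact Hg].
    - apply HN; lia. }
  unfold gap_sat. simpl.
  split; intros [ds [Hnd [Hk Hall]]]; exists ds; do 2 (split; [assumption|]);
    intros d Hd; apply Hchild, Hall, Hd.
Qed.

Lemma sform_gap_stable (f : sform unit) : gap_stable f.
Proof.
  revert f.
  apply (form_mut unit gap_stable (fun p => forall f, In f (patoms p) -> gap_stable f)).
  - exists 0. reflexivity.
  - exists 0. reflexivity.
  - intros g [N HN]. exists N. intros a b Ha Hb. unfold gap_sat in *. simpl.
    now rewrite (HN a b Ha Hb).
  - intros g [N1 H1] h [N2 H2]. exists (max N1 N2). intros a b Ha Hb.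
    unfold gap_sat in *. simpl. rewrite (H1 a b), (H2 a b); [reflexivity | lia ..].
  - exact gap_stable_E.
  - exact gap_stable_D.
  - intros f Hf f' [<- | []]. exact Hf.
  - auto.
  - intros q Hq r Hr f Hf. apply in_app_iff in Hf as [Hf|Hf]; auto.
  - auto.
  - intros q Hq r Hr f Hf. apply in_app_iff in Hf as [Hf|Hf]; auto.
Qed.

Lemma gap_tree_even_not_L2 n : ~ L2 (gap_tree (Some (2 * n))).
Proof.
  intros [pi [Hpi [Hnot_p Hchild]]].
  destruct (Hchild n) as [d [Hn Hd]].
  rewrite (path_on_spine _ pi Hpi _ (Hnot_p _)) in Hn, Hd.
  apply in_true_spine in Hd. destruct Hd as [Htrue | []]. subst d.
  apply gap_node_spine in Hn. destruct Hn as [Hgap _].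
  apply Hgap, descendn_Some_eq_0. reflexivity.
Qed.

Lemma gap_tree_odd_L2 n : L2 (gap_tree (Some (S (2 * n)))).
Proof.
  exists (fun j => repeat false j). split; [apply gap_spine_is_path|]. split.
  - intros j Hj. apply repeat_spec in Hj. discriminate.
  - intros i. exists true. split.
    + apply gap_node_spine. split; [|constructor].
      rewrite descendn_Some_eq_0. lia.
    + apply in_true_spine. now left.
Qed.

Theorem corollary24 :
  ~ exists phi : sform unit, wf_s phi /\
      forall (D : Type) (T : ktree D unit), in_lang phi T <-> L2 T.
Proof.
  intros [phi [_ Hphi]].
  destruct (sform_gap_stable phi) as [N HN].
  apply (gap_tree_even_not_L2 N), Hphi.
  apply (HN (2 * N) (S (2 * N))); [lia | lia |].
  apply Hphi, gap_tree_odd_L2.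
Qed.
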